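(* In the standing setting, suppose $G$ is the series or parallel composition of SP digraphs $G_1$ and $G_2$, and suppose a robust $\boldsymbol b$-flow exists. Then there exists an optimal robust $\boldsymbol b$-flow $\boldsymbol f=(f^1,f^2)$ with $\delta(f^2|G_1)\ge\delta(f^1|G_1)$ and $\delta(f^2|G_2)\ge\delta(f^1|G_2)$.
   Context: A RobMCF instance $(G,u,c,\boldsymbol b)$ consists of a finite directed graph (parallel arcs allowed) $G=(V,A)$ whose arc set is partitioned as $A=A^{\mathrm{fix}}\cup A^{\mathrm{free}}$ into fixed and free arcs, capacities $u:A\to\mathbb Z_{\ge0}$, costs $c:A\to\mathbb Z_{\ge0}$, a finite nonempty set of scenarios $\Lambda$, and balances $b^\lambda:V\to\mathbb Z$ with $\sum_{v}b^\lambda(v)=0$. A $b^\lambda$-flow is a function $f^\lambda:A\to\mathbb Z_{\ge0}$ with $f^\lambda(a)\le u(a)$ for all $a$ and $\sum_{a=(v,w)\in A}f^\lambda(a)-\sum_{a=(w,v)\in A}f^\lambda(a)=b^\lambda(v)$ for all $v\in V$; its cost is $c(f^\lambda)=\sum_a c(a)f^\lambda(a)$. A robust $\boldsymbol b$-flow is a tuple $(f^\lambda)_{\lambda\in\Lambda}$ of $b^\lambda$-flows with $f^\lambda(a)=f^{\lambda'}(a)$ for all $a\in A^{\mathrm{fix}}$, $\lambda,\lambda'\in\Lambda$; its cost is $\max_\lambda c(f^\lambda)$; it is optimal if of minimum cost. Series-parallel (SP) digraphs are defined recursively: a single arc $(o,q)$ is an SP digraph with origin $o$ and target $q$; if $G_1$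 (origin $o_1$, target $q_1$) and $G_2$ (origin $o_2$, target $q_2$) are SP digraphs, then their series composition (identify $q_1$ with $o_2$; origin $o_1$, target $q_2$) and their parallel composition (identify $o_1$ with $o_2$ to form the origin and $q_1$ with $q_2$ to form the target) are SP digraphs. Standing setting: $G$ is an SP digraph with origin $o$ and target $q$, $\Lambda=\{1,2\}$, and there are integers $0\le d^1\le d^2$ with $b^\lambda(o)=d^\lambda$, $b^\lambda(q)=-d^\lambda$ and $b^\lambda(v)=0$ for all other $v$ (unique source $o$, unique sink $q$). For an SP subgraph $H$ of $G$ with origin $o_H$ and a flow $f^\lambda$, write $\delta(f^\lambda|H)=\sum_{a=(o_H,w)\in A(H)}f^\lambda(a)$ for the flow value entering $H$. *)

From mathcomp Require Import all_boot all_order all_algebra.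
Set Implicit Arguments. Unset Strict Implicit. Unset Printing Implicit Defensive.
Import GRing.Theory Num.Theory.
Local Open Scope ring_scope.

(* A finite digraph with (possibly parallel) arcs: vertex type V, arc type A,
   each arc a goes from tl a to hd a. An SP subgraph is given by its arc set
   S : {set A} together with its origin and target. *)
Section Defs.
Variables (V A : finType) (tl hd : A -> V).

Definition verts (S : {set A}) : {set V} :=
  [set v | [exists a in S, (tl a == v) || (hd a == v)]].

Definition series_comp (S1 : {set A}) (o1 q1 : V) (S2 : {set A}) (o2 q2 : V)
    (S : {set A}) (o q : V) : Prop :=
  [disjoint S1 & S2] /\ S = S1 :|: S2 /\ q1 = o2 /\ o = o1 /\ q = q2 /\
  verts S1 :&: verts S2 = [set q1].

Definition parallel_comp (S1 : {set A}) (o1 q1 : V) (S2 : {set A}) (o2 q2 : V)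
    (S : {set A}) (o q : V) : Prop :=
  [disjoint S1 & S2] /\ S = S1 :|: S2 /\ o = o1 /\ o = o2 /\ q = q1 /\ q = q2 /\
  verts S1 :&: verts S2 = [set o; q].

Inductive isSP : {set A} -> V -> V -> Prop :=
  | SP_arc (a : A) : tl a != hd a -> isSP [set a] (tl a) (hd a)
  | SP_series S1 o1 q1 S2 o2 q2 S o q :
      isSP S1 o1 q1 -> isSP S2 o2 q2 ->
      series_comp S1 o1 q1 S2 o2 q2 S o q -> isSP S o q
  | SP_parallel S1 o1 q1 S2 o2 q2 S o q :
      isSP S1 o1 q1 -> isSP S2 o2 q2 ->
      parallel_comp S1 o1 q1 S2 o2 q2 S o q -> isSP S o q.

Definition st_balance (o q : V) (d : nat) (v : V) : int :=
  (if v == o then d%:Z else if v == q then - d%:Z else 0)%R.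

Definition is_bflow (u : A -> nat) (b : V -> int) (f : A -> nat) : Prop :=
  (forall a, f a <= u a)%N /\
  forall v, ((\sum_(a | tl a == v) f a)%N%:Z - (\sum_(a | hd a == v) f a)%N%:Z)
            = b v.

Definition flow_cost (c : A -> nat) (f : A -> nat) : nat := (\sum_a c a * f a)%N.

(* robust flow for two scenarios (Lambda = {1,2}) *)
Definition is_robust_flow (fixed : {set A}) (u : A -> nat) (b1 b2 : V -> int)
    (f1 f2 : A -> nat) : Prop :=
  [/\ is_bflow u b1 f1, is_bflow u b2 f2 & forall a, a \in fixed -> f1 a = f2 a].

Definition robust_cost (c : A -> nat) (f1 f2 : A -> nat) : nat :=
  maxn (flow_cost c f1) (flow_cost c f2).

Definition is_optimal_robust_flow (fixed : {set A}) (u c : A -> nat)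
    (b1 b2 : V -> int) (f1 f2 : A -> nat) : Prop :=
  is_robust_flow fixed u b1 b2 f1 f2 /\
  forall g1 g2, is_robust_flow fixed u b1 b2 g1 g2 ->
    (robust_cost c f1 f2 <= robust_cost c g1 g2)%N.

Definition delta (S : {set A}) (oH : V) (f : A -> nat) : nat :=
  (\sum_(a in S | tl a == oH) f a)%N.

End Defs.

(* Work with flows restricted to an arc set S: [st_flow S o q v g] says that g,
   seen on the arcs of S only, is an o-q flow of value v.  This is
     proved by induction on the SP decomposition.
   - Exchange: on a parallel composition, if an optimal robust flow carries more
     flow into G1 in scenario 1 than in scenario 2, interpolating on G2 builds
     two robust flows of total cost equal to the old one, one of which is again
     optimal and has monotone part-flows.
   In the series case every flow has delta = d^lambda on both parts, so any
   optimal robust flow (which exists, costs being natural numbers) works. *)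

From mathcomp Require Import all_boot all_order all_algebra zify.
From Stdlib Require Import Classical.
Set Implicit Arguments. Unset Strict Implicit. Unset Printing Implicit Defensive.
Import GRing.Theory Num.Theory.

Lemma sum_setU (A : finType) (S1 S2 : {set A}) (P : pred A) (F : A -> nat) :
  [disjoint S1 & S2] ->
  (\sum_(a in S1 :|: S2 | P a) F a
   = \sum_(a in S1 | P a) F a + \sum_(a in S2 | P a) F a)%N.
Proof.
move=> dis; rewrite !big_mkcondr /=.
by rewrite (eq_bigl [predU S1 & S2]) ?bigU // => a; rewrite !inE.
Qed.

Lemma sum_by_endpoint (V A : finType) (f : A -> V) (S : {set A}) (g : A -> nat) :
  (\sum_(w : V) \sum_(a in S | f a == w) g a = \sum_(a in S) g a)%N.
Proof.
under eq_bigr do rewrite big_mkcond /=.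
rewrite exchange_big /= [RHS]big_mkcond /=; apply: eq_bigr => a _.
rewrite (bigD1 (f a)) //= eqxx andbT big1 ?addn0 // => w /negPf ne.
by rewrite eq_sym ne andbF.
Qed.

Lemma two_terminal (V : finType) (o q : V) (h : V -> int) :
  o != q -> (forall w, w != o -> w != q -> h w = 0%R) -> (\sum_w h w = 0)%R ->
  h q = (- h o)%R.
Proof.
move=> oq hz; rewrite (bigD1 o) // (bigD1 q) 1?eq_sym //= big1 ?addr0.
  by move=> E; lia.
by move=> w /andP[wo wq]; apply: hz.
Qed.

Lemma st_balance_add (V : finType) (o q : V) (a b : nat) (w : V) :
  (st_balance o q a w + st_balance o q b w)%R = st_balance o q (a + b) w.
Proof. rewrite /st_balance; case: (w == o); case: (w == q) => /=; lia. Qed.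

Lemma st_balance_series (V : finType) (o1 q1 q2 : V) (t : nat) (w : V) :
  o1 != q1 -> q1 != q2 -> o1 != q2 ->
  (st_balance o1 q1 t w + st_balance q1 q2 t w)%R = st_balance o1 q2 t w.
Proof.
move=> n1 n2 n3; rewrite /st_balance.
have [->|wo] := eqVneq w o1; first by rewrite ?eqxx (negPf n1) (negPf n3); lia.
have [->|wq] := eqVneq w q1; first by rewrite (negPf n2); lia.
by case: (w == q2); lia.
Qed.

Lemma nat_min_exists (P : nat -> Prop) :
  (exists n, P n) -> exists n, P n /\ forall m, P m -> n <= m.
Proof.
move=> [n Pn]; elim/ltn_ind: n Pn => n IH Pn.
case: (classic (exists m, m < n /\ P m)) => [[m [lt Pm]]|N]; first exact: IH m lt Pm.
exists n; split=> // m Pm; rewrite leqNgt; apply/negP => lt; by apply: N; exists m.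
Qed.

Section SubsetFlows.
Variables (V A : finType) (tl hd : A -> V).

Definition net (S : {set A}) (g : A -> nat) (w : V) : int :=
  (Posz (\sum_(a in S | tl a == w) g a)%N - Posz (\sum_(a in S | hd a == w) g a)%N)%R.

Definition st_flow (S : {set A}) (o q : V) (v : nat) (g : A -> nat) : Prop :=
  forall w, net S g w = st_balance o q v w.

Definition glue (S : {set A}) (x y : A -> nat) (a : A) : nat :=
  if a \in S then x a else y a.

Lemma net_setU (S1 S2 : {set A}) (g : A -> nat) (w : V) :
  [disjoint S1 & S2] -> net (S1 :|: S2) g w = (net S1 g w + net S2 g w)%R.
Proof. by move=> dis; rewrite /net !sum_setU //; lia. Qed.

Lemma net_notin (S : {set A}) (g : A -> nat) (w : V) :
  w \notin verts tl hd S -> net S g w = 0%R.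
Proof.
move=> wS; rewrite /net !big1 //= => a /andP[aS /eqP E]; case/negP: wS;
  rewrite inE; apply/existsP; exists a; rewrite aS E eqxx ?orbT //.
Qed.

(* Every unit of flow leaving some vertex enters another one. *)
Lemma net_sum0 (S : {set A}) (g : A -> nat) : (\sum_(w : V) net S g w = 0)%R.
Proof.
rewrite /net sumrB -!(big_morph Posz PoszD (erefl (Posz 0))) !sum_by_endpoint.
by rewrite subrr.
Qed.

Lemma net_ext (S : {set A}) (g g' : A -> nat) (w : V) :
  {in S, g =1 g'} -> net S g w = net S g' w.
Proof.
by move=> E; rewrite /net; congr (Posz _ - Posz _)%R;
  apply: eq_bigr => a /andP[aS _]; exact: E.
Qed.

Lemma delta_ext (S : {set A}) (g g' : A -> nat) (o : V) :
  {in S, g =1 g'} -> delta tl S o g = delta tl S o g'.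
Proof. by move=> E; apply: eq_bigr => a /andP[aS _]; exact: E. Qed.

Lemma net_glue (S1 S2 : {set A}) (x y : A -> nat) (w : V) :
  [disjoint S1 & S2] ->
  net (S1 :|: S2) (glue S1 x y) w = (net S1 x w + net S2 y w)%R.
Proof.
move=> dis; rewrite net_setU //; congr (_ + _)%R; apply: net_ext => a aS.
  by rewrite /glue aS.
by rewrite /glue (disjointFl dis aS).
Qed.

Lemma delta_glue_in (S : {set A}) (x y : A -> nat) (o : V) :
  delta tl S o (glue S x y) = delta tl S o x.
Proof. by apply: delta_ext => a aS; rewrite /glue aS. Qed.

Lemma delta_glue_out (S1 S2 : {set A}) (x y : A -> nat) (o : V) :
  [disjoint S1 & S2] -> delta tl S2 o (glue S1 x y) = delta tl S2 o y.
Proof.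
by move=> dis; apply: delta_ext => a aS; rewrite /glue (disjointFl dis aS).
Qed.

Lemma verts_setUl (S1 S2 : {set A}) (x : V) :
  x \in verts tl hd S1 -> x \in verts tl hd (S1 :|: S2).
Proof.
rewrite !inE => /existsP[a /andP[aS h]]; apply/existsP; exists a; by rewrite inE aS.
Qed.

Lemma verts_setUr (S1 S2 : {set A}) (x : V) :
  x \in verts tl hd S2 -> x \in verts tl hd (S1 :|: S2).
Proof. by rewrite setUC; apply: verts_setUl. Qed.

Lemma series_separation (S1 S2 : {set A}) (o1 q1 q2 : V) :
  o1 \in verts tl hd S1 -> q2 \in verts tl hd S2 ->
  verts tl hd S1 :&: verts tl hd S2 = [set q1] -> o1 != q1 -> q2 != q1 ->
  o1 \notin verts tl hd S2 /\ q2 \notin verts tl hd S1.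
Proof.
move=> o1S1 q2S2 I n1 n2; split; apply/negP => X.
- have : o1 \in [set q1] by rewrite -I inE o1S1 X.
  by rewrite inE (negPf n1).
- have : q2 \in [set q1] by rewrite -I inE X q2S2.
  by rewrite inE (negPf n2).
Qed.

Lemma SP_terminals (S : {set A}) (o q : V) :
  isSP tl hd S o q ->
  [/\ o \in verts tl hd S, q \in verts tl hd S, o != q &
      forall a, a \in S -> hd a != o].
Proof.
elim=> {S o q}.
- move=> a ne; split => //.
  + by rewrite inE; apply/existsP; exists a; rewrite inE !eqxx.
  + by rewrite inE; apply/existsP; exists a; rewrite inE !eqxx orbT.
  + by move=> x; rewrite inE => /eqP ->; rewrite eq_sym.
- move=> S1 o1 q1 S2 o2 q2 S o q _ [v1 _ n1 h1] _ [_ w2 n2 _]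
    [dis [-> [E1 [-> [-> I]]]]]; subst o2.
  have [o1n _] : o1 \notin verts tl hd S2 /\ q2 \notin verts tl hd S1.
    by apply: (series_separation (q1 := q1)) => //; rewrite eq_sym.
  split; [exact: verts_setUl | exact: verts_setUr | |].
  + by apply: contraNneq o1n => ->.
  + move=> a; rewrite inE => /orP[aS|aS]; first exact: h1.
    apply: contraNneq o1n => <-; rewrite inE; apply/existsP.
    by exists a; rewrite aS eqxx orbT.
- move=> S1 o1 q1 S2 o2 q2 S o q _ [v1 w1 n1 h1] _ [_ _ _ h2]
    [dis [-> [-> [E2 [-> [E3 I]]]]]]; subst o2 q2.
  split; [exact: verts_setUl | exact: verts_setUl | done |].
  by move=> a; rewrite inE => /orP[aS|aS]; [apply: h1 | apply: h2].
Qed.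

Lemma net_origin (S : {set A}) (o q : V) (g : A -> nat) :
  isSP tl hd S o q -> net S g o = Posz (delta tl S o g).
Proof.
move=> /SP_terminals[_ _ _ no_in].
rewrite /net /delta [X in (_ - Posz X)%R]big1 ?subr0 // => a /andP[aS /eqP E].
by move: (no_in a aS); rewrite E eqxx.
Qed.

Lemma st_flow_delta (S : {set A}) (o q : V) (v : nat) (g : A -> nat) :
  isSP tl hd S o q -> st_flow S o q v g -> delta tl S o g = v.
Proof.
by move=> sp F; have := F o; rewrite (net_origin _ sp) /st_balance eqxx => -[].
Qed.

Lemma st_flow_restrict (S1 S2 : {set A}) (o q : V) (g : A -> nat) :
  isSP tl hd S1 o q -> [disjoint S1 & S2] ->
  verts tl hd S1 :&: verts tl hd S2 \subset [set o; q] ->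
  (forall w, w != o -> w != q -> w \in verts tl hd S1 -> w \notin verts tl hd S2 ->
     net (S1 :|: S2) g w = 0%R) ->
  st_flow S1 o q (delta tl S1 o g) g.
Proof.
move=> sp dis /subsetP I Z; have [_ _ oq _] := SP_terminals sp.
have conserved : forall w, w != o -> w != q -> net S1 g w = 0%R.
  move=> w wo wq; have [wS1|] := boolP (w \in verts tl hd S1); last exact: net_notin.
  have wS2 : w \notin verts tl hd S2.
    apply: contra wo => wS2.
    have /I : w \in verts tl hd S1 :&: verts tl hd S2 by rewrite in_setI wS1 wS2.
    by rewrite in_set2 (negPf wq) orbF.
  by rewrite -(Z w wo wq wS1 wS2) net_setU // (net_notin g wS2) addr0.
have at_o := net_origin g sp.
have at_q := two_terminal oq conserved (net_sum0 S1 g).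
move=> w; rewrite /st_balance.
have [->|wo] := eqVneq w o; first by rewrite at_o.
have [->|wq] := eqVneq w q; first by rewrite at_q at_o.
exact: conserved.
Qed.

Lemma series_restrict (S1 S2 : {set A}) (o1 q1 q2 : V) (v : nat) (g : A -> nat) :
  isSP tl hd S1 o1 q1 -> isSP tl hd S2 q1 q2 -> [disjoint S1 & S2] ->
  verts tl hd S1 :&: verts tl hd S2 = [set q1] ->
  st_flow (S1 :|: S2) o1 q2 v g ->
  st_flow S1 o1 q1 v g /\ st_flow S2 q1 q2 v g.
Proof.
move=> sp1 sp2 dis I F.
have [v1 _ n1 _] := SP_terminals sp1; have [_ w2 n2 _] := SP_terminals sp2.
have [o1n q2n] := series_separation v1 w2 I n1 (ltac:(by rewrite eq_sym)).
have val1 : delta tl S1 o1 g = v.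
  have := F o1; rewrite net_setU // (net_notin g o1n) addr0 (net_origin _ sp1).
  by rewrite /st_balance eqxx => -[].
have F1 : st_flow S1 o1 q1 v g.
  rewrite -val1; apply: (st_flow_restrict (S2 := S2)) => //.
    by rewrite I sub1set !inE eqxx orbT.
  move=> w wo wq wS1 _; rewrite F /st_balance (negPf wo).
  by case: eqP wS1 => [->|//]; rewrite (negPf q2n).
split=> //; rewrite -(_ : delta tl S2 q1 g = v).
  apply: (st_flow_restrict (S2 := S1)) => //; first by rewrite disjoint_sym.
    by rewrite setIC I sub1set !inE eqxx.
  move=> w wo wq wS2 wS1; rewrite setUC F /st_balance (negPf wq).
  by case: eqP wS1 => [->|//]; rewrite v1.
have := F q1; rewrite net_setU // F1 (net_origin _ sp2) /st_balance eqxx.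
rewrite [q1 == o1]eq_sym (negPf n1) (negPf n2) /= => /eqP.
by rewrite addrC subr_eq0 => /eqP[].
Qed.

Lemma parallel_restrict (S1 S2 : {set A}) (o q : V) (v : nat) (g : A -> nat) :
  isSP tl hd S1 o q -> isSP tl hd S2 o q -> [disjoint S1 & S2] ->
  verts tl hd S1 :&: verts tl hd S2 = [set o; q] ->
  st_flow (S1 :|: S2) o q v g ->
  [/\ st_flow S1 o q (delta tl S1 o g) g, st_flow S2 o q (delta tl S2 o g) g
    & v = delta tl S1 o g + delta tl S2 o g].
Proof.
move=> sp1 sp2 dis I F.
have conserved : forall w, w != o -> w != q -> net (S1 :|: S2) g w = 0%R.
  by move=> w wo wq; rewrite F /st_balance (negPf wo) (negPf wq).
split.
- by apply: (st_flow_restrict (S2 := S2)); rewrite ?I // => w wo wq _ _; apply: conserved.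
- apply: (st_flow_restrict (S2 := S1)) => //; first by rewrite disjoint_sym.
    by rewrite setIC I.
  by move=> w wo wq _ _; rewrite setUC; apply: conserved.
- have := F o; rewrite net_setU // (net_origin _ sp1) (net_origin _ sp2).
  by rewrite /st_balance eqxx -PoszD => -[->].
Qed.

Lemma net_set1 (a : A) (g : A -> nat) (w : V) :
  net [set a] g w =
  (Posz (if tl a == w then g a else 0) - Posz (if hd a == w then g a else 0))%R.
Proof. by rewrite /net !big_mkcondr /= !big_set1. Qed.

Lemma st_flow_arc (a : A) (v : nat) (g : A -> nat) :
  tl a != hd a -> st_flow [set a] (tl a) (hd a) v g <-> g a = v.
Proof.
move=> ne; split.
  move=> F; have := F (tl a).
  by rewrite net_set1 /st_balance eqxx [hd a == _]eq_sym (negPf ne) => E; lia.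
move=> E w; rewrite net_set1 /st_balance E [tl a == w]eq_sym [hd a == w]eq_sym.
have [->|wt] := eqVneq w (tl a); first by rewrite (negPf ne); lia.
by case: (w == hd a); lia.
Qed.

Definition interpolable (S : {set A}) (o q : V) : Prop :=
  forall (v1 v2 t : nat) (g1 g2 : A -> nat),
  st_flow S o q v1 g1 -> st_flow S o q v2 g2 -> minn v1 v2 <= t <= maxn v1 v2 ->
  exists g' g'', [/\ st_flow S o q t g', st_flow S o q (v1 + v2 - t) g'' &
    forall a, g' a + g'' a = g1 a + g2 a /\
              minn (g1 a) (g2 a) <= g' a <= maxn (g1 a) (g2 a)].

(* On a single arc, put t and v1 + v2 - t on it and keep everything else. *)
Lemma interpolable_arc (a : A) :
  tl a != hd a -> interpolable [set a] (tl a) (hd a).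
Proof.
move=> ne v1 v2 t g1 g2 /(st_flow_arc _ _ ne) E1 /(st_flow_arc _ _ ne) E2 Ht.
exists (fun x => if x == a then t else g1 x).
exists (fun x => if x == a then v1 + v2 - t else g2 x).
split; [by apply/(st_flow_arc _ _ ne); rewrite eqxx.. |].
by move=> x; case: eqP => [->|_]; rewrite ?E1 ?E2; lia.
Qed.

(* On a series composition, interpolate on both parts with the same t. *)
Lemma interpolable_series (S1 S2 : {set A}) (o1 q1 q2 : V) :
  isSP tl hd S1 o1 q1 -> isSP tl hd S2 q1 q2 -> [disjoint S1 & S2] ->
  verts tl hd S1 :&: verts tl hd S2 = [set q1] ->
  interpolable S1 o1 q1 -> interpolable S2 q1 q2 -> interpolable (S1 :|: S2) o1 q2.
Proof.
move=> sp1 sp2 dis I IH1 IH2 v1 v2 t g1 g2 F1 F2 Ht.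
have [v1S _ n1 _] := SP_terminals sp1; have [_ w2 n2 _] := SP_terminals sp2.
have [o1n _] := series_separation v1S w2 I n1 (ltac:(by rewrite eq_sym)).
have n3 : o1 != q2 by apply: contraNneq o1n => ->.
have [F11 F12] := series_restrict sp1 sp2 dis I F1.
have [F21 F22] := series_restrict sp1 sp2 dis I F2.
have [x1 [y1 [X1 Y1 P1]]] := IH1 _ _ _ _ _ F11 F21 Ht.
have [x2 [y2 [X2 Y2 P2]]] := IH2 _ _ _ _ _ F12 F22 Ht.
exists (glue S1 x1 x2), (glue S1 y1 y2); split.
- by move=> w; rewrite net_glue // X1 X2 st_balance_series.
- by move=> w; rewrite net_glue // Y1 Y2 st_balance_series.
- by move=> a; rewrite /glue; case: (a \in S1).
Qed.

(* On a parallel composition, split t into an intermediate value on each part. *)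
Lemma interpolable_parallel (S1 S2 : {set A}) (o q : V) :
  isSP tl hd S1 o q -> isSP tl hd S2 o q -> [disjoint S1 & S2] ->
  verts tl hd S1 :&: verts tl hd S2 = [set o; q] ->
  interpolable S1 o q -> interpolable S2 o q -> interpolable (S1 :|: S2) o q.
Proof.
move=> sp1 sp2 dis I IH1 IH2 v1 v2 t g1 g2 F1 F2 Ht.
have [A1 B1 E1] := parallel_restrict sp1 sp2 dis I F1.
have [A2 B2 E2] := parallel_restrict sp1 sp2 dis I F2.
set p1 := delta tl S1 o g1 in A1 E1; set r1 := delta tl S2 o g1 in B1 E1.
set p2 := delta tl S1 o g2 in A2 E2; set r2 := delta tl S2 o g2 in B2 E2.
pose t1 := minn (maxn p1 p2) (t - minn r1 r2).
have Ht1 : minn p1 p2 <= t1 <= maxn p1 p2 by rewrite /t1; lia.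
have Ht2 : minn r1 r2 <= t - t1 <= maxn r1 r2 by rewrite /t1; lia.
have [x1 [y1 [X1 Y1 P1]]] := IH1 _ _ _ _ _ A1 A2 Ht1.
have [x2 [y2 [X2 Y2 P2]]] := IH2 _ _ _ _ _ B1 B2 Ht2.
exists (glue S1 x1 x2), (glue S1 y1 y2); split.
- move=> w; rewrite net_glue // X1 X2 st_balance_add.
  by congr st_balance; rewrite /t1; lia.
- move=> w; rewrite net_glue // Y1 Y2 st_balance_add.
  by congr st_balance; rewrite /t1; lia.
- by move=> a; rewrite /glue; case: (a \in S1).
Qed.

Lemma SP_interpolable (S : {set A}) (o q : V) :
  isSP tl hd S o q -> interpolable S o q.
Proof.
elim=> {S o q}.
- exact: interpolable_arc.
- move=> S1 o1 q1 S2 o2 q2 S o q sp1 IH1 sp2 IH2 [dis [-> [E [-> [-> I]]]]].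
  by subst o2; exact: interpolable_series sp1 sp2 dis I IH1 IH2.
- move=> S1 o1 q1 S2 o2 q2 S o q sp1 IH1 sp2 IH2 [dis [-> [-> [E2 [-> [E3 I]]]]]].
  by subst o2 q2; exact: interpolable_parallel sp1 sp2 dis I IH1 IH2.
Qed.

End SubsetFlows.

Section RobustFlows.
Variables (V A : finType) (tl hd : A -> V) (fixed : {set A}) (u c : A -> nat).

Lemma bflow_st_flow (o q : V) (d : nat) (f : A -> nat) :
  is_bflow tl hd u (st_balance o q d) f <->
  (forall a, f a <= u a) /\ st_flow tl hd [set: A] o q d f.
Proof.
have sumT (P : pred A) (F : A -> nat) :
    (\sum_(a in [set: A] | P a) F a = \sum_(a | P a) F a)%N.
  by apply: eq_bigl => a; rewrite in_setT.
rewrite /is_bflow /st_flow /net; split=> -[cap F]; split=> // w.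
  by rewrite !sumT.
by rewrite -F !sumT.
Qed.

Definition part_cost (S : {set A}) (g : A -> nat) : nat := (\sum_(a in S) c a * g a)%N.

Lemma flow_cost_setU (S1 S2 : {set A}) (f : A -> nat) :
  [set: A] = S1 :|: S2 -> [disjoint S1 & S2] ->
  flow_cost c f = part_cost S1 f + part_cost S2 f.
Proof.
move=> ET dis; rewrite /flow_cost /part_cost -bigU //; apply: eq_bigl => a.
by rewrite !inE -in_setU -ET in_setT.
Qed.

Lemma part_cost_ext (S : {set A}) (g g' : A -> nat) :
  {in S, g =1 g'} -> part_cost S g = part_cost S g'.
Proof. by move=> E; apply: eq_bigr => a aS; rewrite E. Qed.

(* Costs are natural numbers, so a feasible instance has an optimal solution. *)
Lemma optimal_robust_exists (b1 b2 : V -> int) :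
  (exists f1 f2, is_robust_flow tl hd fixed u b1 b2 f1 f2) ->
  exists f1 f2, is_optimal_robust_flow tl hd fixed u c b1 b2 f1 f2.
Proof.
move=> [h1 [h2 Rh]].
have [M [[f1 [f2 [Rf Mf]]] Mmin]] := nat_min_exists (P := fun n => exists g1 g2,
  is_robust_flow tl hd fixed u b1 b2 g1 g2 /\ robust_cost c g1 g2 = n)
  (ex_intro _ _ (ex_intro _ h1 (ex_intro _ h2 (conj Rh erefl)))).
exists f1, f2; split=> // g1 g2 R; rewrite Mf; apply: Mmin; by exists g1, g2.
Qed.

(* Exchange argument: if (h1, f2) and (f1, h2) are robust and h1, h2 together
   cost as much as f1, f2, then one of the two pairs is optimal whenever
   (f1, f2) is: either h1 costs at most the optimum, or h2 costs less than f2. *)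
Lemma exchange_optimal (b1 b2 : V -> int) (f1 f2 h1 h2 : A -> nat) :
  is_optimal_robust_flow tl hd fixed u c b1 b2 f1 f2 ->
  is_robust_flow tl hd fixed u b1 b2 h1 f2 -> is_robust_flow tl hd fixed u b1 b2 f1 h2 ->
  flow_cost c h1 + flow_cost c h2 = flow_cost c f1 + flow_cost c f2 ->
  is_optimal_robust_flow tl hd fixed u c b1 b2 h1 f2 \/
  is_optimal_robust_flow tl hd fixed u c b1 b2 f1 h2.
Proof.
move=> [_ opt] R1 R2 E; have [le|gt] := leqP (flow_cost c h1) (robust_cost c f1 f2).
- left; split=> // g1 g2 R; apply: leq_trans (opt _ _ R).
  by rewrite /robust_cost geq_max le leq_maxr.
- right; split=> // g1 g2 R; apply: leq_trans (opt _ _ R).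
  by move: gt; rewrite /robust_cost geq_max leq_maxl /=; lia.
Qed.

Lemma glue_cost_exchange (S1 S2 : {set A}) (f1 f2 g' g'' : A -> nat) :
  [set: A] = S1 :|: S2 -> [disjoint S1 & S2] ->
  (forall a, g' a + g'' a = f1 a + f2 a) ->
  flow_cost c (glue S1 f2 g') + flow_cost c (glue S1 f1 g'')
  = flow_cost c f1 + flow_cost c f2.
Proof.
move=> ET dis sum; rewrite !(flow_cost_setU _ ET dis).
have on_S1 x y : part_cost S1 (glue S1 x y) = part_cost S1 x.
  by apply: part_cost_ext => a aS; rewrite /glue aS.
have on_S2 x y : part_cost S2 (glue S1 x y) = part_cost S2 y.
  by apply: part_cost_ext => a aS; rewrite /glue (disjointFl dis aS).
have split_S2 : part_cost S2 g' + part_cost S2 g'' = part_cost S2 f1 + part_cost S2 f2.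
  by rewrite /part_cost -!big_split /=; apply: eq_bigr => a _; rewrite -!mulnDr sum.
by rewrite !on_S1 !on_S2; lia.
Qed.

Lemma parallel_glue_bflow (S1 S2 : {set A}) (o q : V) (p r : nat) (x y : A -> nat) :
  [set: A] = S1 :|: S2 -> [disjoint S1 & S2] ->
  st_flow tl hd S1 o q p x -> st_flow tl hd S2 o q r y ->
  (forall a, glue S1 x y a <= u a) ->
  is_bflow tl hd u (st_balance o q (p + r)) (glue S1 x y).
Proof.
move=> ET dis Fx Fy cap; apply/bflow_st_flow; split=> // w.
by rewrite ET net_glue // Fx Fy st_balance_add.
Qed.

Lemma between_robust (b1 b2 : V -> int) (f1 f2 h : A -> nat) :
  is_robust_flow tl hd fixed u b1 b2 f1 f2 ->
  (forall a, minn (f1 a) (f2 a) <= h a <= maxn (f1 a) (f2 a)) ->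
  (forall a, h a <= u a) /\ {in fixed, h =1 f1}.
Proof.
move=> [[cap1 _] [cap2 _] fx] H; split=> a; have := H a.
  by have := cap1 a; have := cap2 a; lia.
by move=> /[swap] /fx; lia.
Qed.

(* On a parallel composition G = G1 || G2, an optimal robust flow carrying more
   flow into G1 in scenario 1 than in scenario 2 can be repaired: interpolate on
   G2 between f1 and f2 at t = r1 + (p1 - p2), then pair (f2 on G1, g' on G2)
   with f2, or f1 with (f1 on G1, g'' on G2); one of them is optimal. *)
Lemma parallel_exchange (S1 S2 : {set A}) (o q : V) (d1 d2 : nat) (f1 f2 : A -> nat) :
  isSP tl hd S1 o q -> isSP tl hd S2 o q -> [disjoint S1 & S2] ->
  [set: A] = S1 :|: S2 -> verts tl hd S1 :&: verts tl hd S2 = [set o; q] ->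
  d1 <= d2 ->
  is_optimal_robust_flow tl hd fixed u c (st_balance o q d1) (st_balance o q d2) f1 f2 ->
  delta tl S1 o f2 < delta tl S1 o f1 ->
  exists F1 F2, [/\ is_optimal_robust_flow tl hd fixed u c
       (st_balance o q d1) (st_balance o q d2) F1 F2,
     delta tl S1 o F1 <= delta tl S1 o F2 & delta tl S2 o F1 <= delta tl S2 o F2].
Proof.
move=> sp1 sp2 dis ET I d12 opt lt.
have [Rf _] := opt; have [/bflow_st_flow[_ T1] /bflow_st_flow[_ T2] _] := Rf.
rewrite ET in T1 T2.
have [A1 B1 E1] := parallel_restrict sp1 sp2 dis I T1.
have [A2 B2 E2] := parallel_restrict sp1 sp2 dis I T2.
set p1 := delta tl S1 o f1 in A1 E1 lt *; set r1 := delta tl S2 o f1 in B1 E1 *.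
set p2 := delta tl S1 o f2 in A2 E2 lt *; set r2 := delta tl S2 o f2 in B2 E2 *.
have Ht : minn r1 r2 <= r1 + (p1 - p2) <= maxn r1 r2 by lia.
have [g' [g'' [G1 G2 P]]] := SP_interpolable sp2 B1 B2 Ht.
pose h1 := glue S1 f2 g'; pose h2 := glue S1 f1 g''.
have [cap_h1 fix_h1] : (forall a, h1 a <= u a) /\ {in fixed, h1 =1 f1}.
  by apply: (between_robust Rf) => a; rewrite /h1 /glue; case: ifP; have := P a; lia.
have [cap_h2 fix_h2] : (forall a, h2 a <= u a) /\ {in fixed, h2 =1 f1}.
  by apply: (between_robust Rf) => a; rewrite /h2 /glue; case: ifP; have := P a; lia.
have R1 : is_robust_flow tl hd fixed u (st_balance o q d1) (st_balance o q d2) h1 f2.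
  have [_ ? fx] := Rf; split=> // [|a af]; last by rewrite -fx // fix_h1.
  have -> : d1 = p2 + (r1 + (p1 - p2)) by lia.
  exact: parallel_glue_bflow ET dis A2 G1 cap_h1.
have R2 : is_robust_flow tl hd fixed u (st_balance o q d1) (st_balance o q d2) f1 h2.
  have [? _ fx] := Rf; split=> // [|a af]; last by rewrite fix_h2.
  have -> : d2 = p1 + (r1 + r2 - (r1 + (p1 - p2))) by lia.
  exact: parallel_glue_bflow ET dis A1 G2 cap_h2.
have cost_sum : flow_cost c h1 + flow_cost c h2 = flow_cost c f1 + flow_cost c f2.
  by apply: (glue_cost_exchange ET dis) => a; case: (P a).
have dg' := st_flow_delta sp2 G1; have dg'' := st_flow_delta sp2 G2.
case: (exchange_optimal opt R1 R2 cost_sum) => [O|O].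
- exists h1, f2; split=> //; first by rewrite delta_glue_in.
  by rewrite delta_glue_out // dg'; lia.
- exists f1, h2; split=> //; first by rewrite delta_glue_in.
  by rewrite delta_glue_out // dg''; lia.
Qed.

(* On a parallel composition some optimal robust flow has monotone part-flows:
   if the part-flow into G1, or else the one into G2, decreases, repair it by
   an exchange on the other part. *)
Lemma parallel_monotone (S1 S2 : {set A}) (o q : V) (d1 d2 : nat) (f1 f2 : A -> nat) :
  isSP tl hd S1 o q -> isSP tl hd S2 o q -> [disjoint S1 & S2] ->
  [set: A] = S1 :|: S2 -> verts tl hd S1 :&: verts tl hd S2 = [set o; q] ->
  d1 <= d2 ->
  is_optimal_robust_flow tl hd fixed u c (st_balance o q d1) (st_balance o q d2) f1 f2 ->
  exists F1 F2, [/\ is_optimal_robust_flow tl hd fixed u c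
       (st_balance o q d1) (st_balance o q d2) F1 F2,
     delta tl S1 o F1 <= delta tl S1 o F2 & delta tl S2 o F1 <= delta tl S2 o F2].
Proof.
move=> sp1 sp2 dis ET I d12 opt.
have [le1|lt1] := leqP (delta tl S1 o f1) (delta tl S1 o f2); last first.
  exact: parallel_exchange sp1 sp2 dis ET I d12 opt lt1.
have [le2|lt2] := leqP (delta tl S2 o f1) (delta tl S2 o f2); first by exists f1, f2.
have [|||F1 [F2 [O X Y]]] := parallel_exchange sp2 sp1 _ _ _ d12 opt lt2.
- by rewrite disjoint_sym.
- by rewrite setUC.
- by rewrite setIC.
- by exists F1, F2.
Qed.

Lemma series_delta (S1 S2 : {set A}) (o1 q1 q2 : V) (d : nat) (f : A -> nat) :
  isSP tl hd S1 o1 q1 -> isSP tl hd S2 q1 q2 -> [disjoint S1 & S2] ->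
  [set: A] = S1 :|: S2 -> verts tl hd S1 :&: verts tl hd S2 = [set q1] ->
  is_bflow tl hd u (st_balance o1 q2 d) f ->
  delta tl S1 o1 f = d /\ delta tl S2 q1 f = d.
Proof.
move=> sp1 sp2 dis ET I /bflow_st_flow[_ F]; rewrite ET in F.
have [F1 F2] := series_restrict sp1 sp2 dis I F.
by rewrite (st_flow_delta sp1 F1) (st_flow_delta sp2 F2).
Qed.

End RobustFlows.

Theorem mainTheorem15
  (V A : finType) (tl hd : A -> V) (fixed : {set A}) (u c : A -> nat)
  (o q : V) (d1 d2 : nat)
  (S1 : {set A}) (o1 q1 : V) (S2 : {set A}) (o2 q2 : V) :
  (d1 <= d2)%N ->
  isSP tl hd S1 o1 q1 -> isSP tl hd S2 o2 q2 ->
  (series_comp tl hd S1 o1 q1 S2 o2 q2 [set: A] o q \/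
   parallel_comp tl hd S1 o1 q1 S2 o2 q2 [set: A] o q) ->
  (exists f1 f2, is_robust_flow tl hd fixed u
      (st_balance o q d1) (st_balance o q d2) f1 f2) ->
  exists f1 f2,
    [/\ is_optimal_robust_flow tl hd fixed u c
          (st_balance o q d1) (st_balance o q d2) f1 f2,
        (delta tl S1 o1 f1 <= delta tl S1 o1 f2)%N
      & (delta tl S2 o2 f1 <= delta tl S2 o2 f2)%N].
Proof.
move=> d12 sp1 sp2 comp feasible.
have [f1 [f2 opt]] := optimal_robust_exists c feasible.
case: comp => [[dis [ET [E [Eo [Eq I]]]]] | [dis [ET [Eo [E2 [Eq [E3 I]]]]]]].
- subst o2 o q; exists f1, f2; have [[R1 R2 _] _] := opt.
  have [-> ->] := series_delta sp1 sp2 dis ET I R1.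
  by have [-> ->] := series_delta sp1 sp2 dis ET I R2.
- subst o1 o2 q1 q2; exact: parallel_monotone sp1 sp2 dis ET I d12 opt.
Qed.
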